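(* Let $\beta\ge 0$, and let $\pi^*_\beta=\{\pi^*_{h,\beta}\}_{h\in[H]}$ be a deterministic Markov optimal policy of the penalized machine MDP $\mathcal{M}^{\mathtt{M}}_\beta$, chosen greedily, i.e. $\pi^*_{h,\beta}(s)\in\arg\max_{a\in\bar{\mathcal{A}}}Q^*_{h,\beta}(s,a)$ for all $h,s$. Then for every $s\in\mathcal{S}$ and $h\in[H]$ with $\pi^*_{h,\beta}(s)\ne\text{defer}$, $$Q_h^*\big(s,\pi^*_{h,\beta}(s)\big)-V_h^{\pi^{\mathtt{H}}}(s)\ \ge\ \beta,$$ where $Q^*_h$ is the optimal $Q$-function of the unpenalized machine MDP $\mathcal{M}^{\mathtt{M}}$ and $V_h^{\pi^{\mathtt{H}}}$ is the value (in $\mathcal{M}^{\mathtt{M}}$) of the machine policy that always chooses defer.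
   Context: A human acts in a finite-horizon episodic MDP with finite state set $\mathcal{S}$, finite action set $\mathcal{A}$, horizon $H$, time-dependent transition kernel $p_h(s'\mid s,a)$ and time-dependent reward $r_h(s,a)\in[0,1]$, $h\in[H]$. The human follows a fixed stochastic policy $\pi^{\mathtt{H}}$ with $\pi^{\mathtt{H}}_h(a\mid s)<1$. The machine chooses advice $a^{\mathtt{M}}\in\bar{\mathcal{A}}:=\mathcal{A}\cup\{\text{defer}\}$; with adherence $\theta:\mathcal{S}\times\mathcal{A}\to[0,1]$, the human's action satisfies $\mathbb{P}_h(a^{\mathtt{H}}=a\mid s,\text{defer})=\pi^{\mathtt{H}}_h(a\mid s)$, and for $a^{\mathtt{M}}\ne\text{defer}$: $\mathbb{P}_h(a^{\mathtt{H}}=a^{\mathtt{M}}\mid s,a^{\mathtt{M}})=\theta(s,a^{\mathtt{M}})$ and $\mathbb{P}_h(a^{\mathtt{H}}=a\mid s,a^{\mathtt{M}})=(1-\theta(s,a^{\mathtt{M}}))\pi^{\mathtt{H}}_h(a\mid s)/(1-\pi^{\mathtt{H}}_h(a^{\mathtt{M}}\mid s))$ for $a\ne a^{\mathtt{M}}$. The machine's MDP $\mathcal{M}^{\mathtt{M}}$ has states $\mathcal{S}$, actions $\bar{\mathcal{A}}$, transition $p^{\mathtt{M}}_h(s'\mid s,a^{\mathtt{M}})=\sum_{a}p_h(s'\mid s,a)\mathbb{P}_h(a\mid s,a^{\mathtt{M}})$ and reward $r^{\mathtt{M}}_h(s,a^{\mathtt{M}})=\sum_a r_h(s,a)\mathbb{P}_h(a\mid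 s,a^{\mathtt{M}})$. Values of deterministic Markov policies $\pi$ are $V^\pi_h(s)=\mathbb{E}[\sum_{h'=h}^H r^{\mathtt{M}}_{h'}(s_{h'},\pi_{h'}(s_{h'}))\mid s_h=s]$, $V^\pi_{H+1}\equiv 0$; $V^*_h=\max_\pi V^\pi_h$ and $Q^*_h(s,a)=r^{\mathtt{M}}_h(s,a)+\sum_{s'}p^{\mathtt{M}}_h(s'\mid s,a)V^*_{h+1}(s')$. The penalized MDP $\mathcal{M}^{\mathtt{M}}_\beta$ is identical to $\mathcal{M}^{\mathtt{M}}$ except its reward is $r^{\mathtt{M}}_{h,\beta}(s,a)=r^{\mathtt{M}}_h(s,a)-\beta\,\mathbb{I}\{a\ne\text{defer}\}$; $V^*_{h,\beta}$ and $Q^*_{h,\beta}(s,a)=r^{\mathtt{M}}_{h,\beta}(s,a)+\sum_{s'}p^{\mathtt{M}}_h(s'\mid s,a)V^*_{h+1,\beta}(s')$ denote its optimal value and $Q$-functions. *)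

From HB Require Import structures.
From mathcomp Require Import all_boot all_order all_algebra.
Set Implicit Arguments. Unset Strict Implicit. Unset Printing Implicit Defensive.
Import Order.TTheory GRing.Theory Num.Theory.
Local Open Scope ring_scope.

(* Steps are 0-indexed: paper's step h \in [H] = {1..H} is our h-1 \in {0..H-1};
   paper's V_{H+1} = 0 is our value at step H. Advice [None] is "defer",
   [Some a] is advising action a; so \bar A = option A. *)
Record hmdp (R : realFieldType) (S A : finType) := HMdp {
  horizon : nat;
  trans : nat -> S -> A -> S -> R;
  rew : nat -> S -> A -> R;
  piH : nat -> S -> A -> R;
  theta : S -> A -> R
}.

Section Defs.
Variables (R : realFieldType) (S A : finType) (M : hmdp R S A).

(* P_h(a^H = a | s, a^M) *)
Definition human_prob (h : nat) (s : S) (am : option A) (a : A) : R :=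
  match am with
  | None => piH M h s a
  | Some b => if a == b then theta M s b
              else (1 - theta M s b) * piH M h s a / (1 - piH M h s b)
  end.

Definition transM (h : nat) (s : S) (am : option A) (s' : S) : R :=
  \sum_(a : A) trans M h s a s' * human_prob h s am a.

Definition rewM (h : nat) (s : S) (am : option A) : R :=
  \sum_(a : A) rew M h s a * human_prob h s am a.

Definition rewMb (beta : R) (h : nat) (s : S) (am : option A) : R :=
  rewM h s am - (if am is Some _ then beta else 0).

Definition policy := {ffun 'I_(horizon M) -> {ffun S -> option A}}.

Definition pol_at (pi : policy) (h : nat) (s : S) : option A :=
  match insub h with Some i => pi i s | None => None end.

Definition defer_policy : policy := [ffun _ => [ffun _ => None]].

Fixpoint value_aux (rw : nat -> S -> option A -> R) (pi : nat -> S -> option A)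
    (n h : nat) (s : S) : R :=
  match n with
  | 0 => 0
  | n'.+1 => rw h s (pi h s)
             + \sum_(s' : S) transM h s (pi h s) s' * value_aux rw pi n' h.+1 s'
  end.

(* V^pi_h(s) in the machine MDP with reward rw (value 0 from step H on) *)
Definition value (rw : nat -> S -> option A -> R) (pi : nat -> S -> option A)
    (h : nat) (s : S) : R :=
  value_aux rw pi (horizon M - h) h s.

(* V^*_h(s) = max over deterministic Markov policies (the max is seeded with the
   value of one of the policies, so it is the genuine maximum) *)
Definition vstar (rw : nat -> S -> option A -> R) (h : nat) (s : S) : R :=
  \big[Num.max/value rw (pol_at defer_policy) h s]_(pi : policy)
     value rw (pol_at pi) h s.

Definition qstar (rw : nat -> S -> option A -> R) (h : nat) (s : S)
    (am : option A) : R :=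
  rw h s am + \sum_(s' : S) transM h s am s' * vstar rw h.+1 s'.

Definition vhuman (h : nat) (s : S) : R := value rewM (fun _ _ => None) h s.

Definition wf_hmdp : Prop :=
  (forall h s a s', (h < horizon M)%N -> 0 <= trans M h s a s') /\
      (forall h s a, (h < horizon M)%N -> \sum_(s' : S) trans M h s a s' = 1) /\
      (forall h s a, (h < horizon M)%N -> 0 <= rew M h s a <= 1) /\
      (forall h s a, (h < horizon M)%N -> 0 <= piH M h s a < 1) /\
      (forall h s, (h < horizon M)%N -> \sum_(a : A) piH M h s a = 1) /\
      (forall s a, 0 <= theta M s a <= 1).

End Defs.

From HB Require Import structures.
From mathcomp Require Import all_boot all_order all_algebra.
Import Order.TTheory GRing.Theory Num.Theory.
Set Implicit Arguments. Unset Strict Implicit. Unset Printing Implicit Defensive.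
Local Open Scope ring_scope.

(* Write Q_beta, V_beta for the penalized optimal Q-
   and value functions and V^H for the always-defer (human) value.  Then
     beta + V^H_h(s) <= beta + Q_beta,h(s, defer)     (V^H <= V_beta at h+1)
                     <= beta + Q_beta,h(s, b)         (greediness)
                     <= Q^*_h(s, b)                   (V_beta <= V^* at h+1).
   The two comparisons of value functions hold because deferring is never
   penalized (so the human policy earns the same in both MDPs) and the
   penalty is nonnegative (so every policy earns at most as much in the
   penalized MDP), and because the machine transitions are nonnegative. *)

Section MachineMDP.
Variables (R : realFieldType) (S A : finType) (M : hmdp R S A).

Lemma value_le_vstar (rw : nat -> S -> option A -> R) (pi : policy M) h s :
  value M rw (pol_at pi) h s <= vstar M rw h s.
Proof. exact: (le_bigmax _ (fun pi => value M rw (pol_at pi) h s)). Qed.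

Lemma vstar_le_vstar (rw1 rw2 : nat -> S -> option A -> R) h s :
  (forall pi : policy M, value M rw1 (pol_at pi) h s <= value M rw2 (pol_at pi) h s) ->
  vstar M rw1 h s <= vstar M rw2 h s.
Proof.
move=> rw12; apply: bigmax_le => [|pi _];
  by apply: le_trans (value_le_vstar _ _ _ _); exact: rw12.
Qed.

Lemma pol_at_defer h s : pol_at (defer_policy M) h s = None.
Proof. by rewrite /pol_at; case: insubP => // i _ _; rewrite !ffunE. Qed.

Lemma value_aux_never_advise beta (pi : nat -> S -> option A) n h s :
  (forall h s, pi h s = None) ->
  value_aux M (rewMb M beta) pi n h s = value_aux M (rewM M) (fun _ _ => None) n h s.
Proof.
move=> pi_None; elim: n h s => [|n IH] h s //=.
rewrite pi_None /rewMb subr0; congr (_ + _).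
by apply: eq_bigr => s' _; rewrite IH.
Qed.

Lemma vhuman_le_vstar_penalized beta h s :
  vhuman M h s <= vstar M (rewMb M beta) h s.
Proof.
apply: le_trans (value_le_vstar _ (defer_policy M) h s).
by rewrite /vhuman /value value_aux_never_advise //; exact: pol_at_defer.
Qed.

Lemma vhuman_step h s : (h < horizon M)%N ->
  vhuman M h s = rewM M h s None
                 + \sum_(s' : S) transM M h s None s' * vhuman M h.+1 s'.
Proof. by move=> hH; rewrite /vhuman /value -(subnSK hH). Qed.

Hypothesis wf : wf_hmdp M.

Lemma human_prob_ge0 h s am a : (h < horizon M)%N -> 0 <= human_prob M h s am a.
Proof.
case: wf => [_ [_ [_ [piH_bnd [_ theta_bnd]]]]] hH.
case: am => [b|] /=; last by case/andP: (piH_bnd h s a hH).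
have [_ /ltW piHb_le1] := andP (piH_bnd h s b hH).
have [theta_ge0 theta_le1] := andP (theta_bnd s b).
case: eqP => // _; rewrite divr_ge0 ?mulr_ge0 ?subr_ge0 //.
by case/andP: (piH_bnd h s a hH).
Qed.

Lemma transM_ge0 h s am s' : (h < horizon M)%N -> 0 <= transM M h s am s'.
Proof.
case: wf => [trans_ge0 _] hH; apply: sumr_ge0 => a _.
by rewrite mulr_ge0 ?human_prob_ge0 ?trans_ge0.
Qed.

Lemma transM_expect_le h s am (f g : S -> R) : (h < horizon M)%N ->
  (forall s', f s' <= g s') ->
  \sum_(s' : S) transM M h s am s' * f s' <= \sum_(s' : S) transM M h s am s' * g s'.
Proof.
by move=> hH fg; apply: ler_sum => s' _; rewrite ler_wpM2l ?transM_ge0.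
Qed.

Variable beta : R.
Hypothesis beta_ge0 : 0 <= beta.

Lemma value_aux_penalty_le (pi : nat -> S -> option A) n h s :
  (h + n <= horizon M)%N ->
  value_aux M (rewMb M beta) pi n h s <= value_aux M (rewM M) pi n h s.
Proof.
elim: n h s => [|n IH] h s //= hn_le.
have hH : (h < horizon M)%N by apply: leq_trans hn_le; rewrite addnS ltnS leq_addr.
apply: lerD; last by apply: transM_expect_le => // s'; apply: IH; rewrite addSnnS.
by rewrite /rewMb; case: (pi h s) => [a|]; rewrite ?subr0 // gerBl.
Qed.

Lemma value_penalty_le (pi : nat -> S -> option A) h s :
  value M (rewMb M beta) pi h s <= value M (rewM M) pi h s.
Proof.
rewrite /value; case: (leqP h (horizon M)) => [hH | /ltnW Hh].
  by apply: value_aux_penalty_le; rewrite subnKC.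
by move: Hh; rewrite -subn_eq0 => /eqP ->.
Qed.

(* Advising b costs beta immediately, and afterwards the penalized optimal
   value is below the unpenalized one. *)
Lemma qstar_penalized_advice_le h s b : (h < horizon M)%N ->
  beta + qstar M (rewMb M beta) h s (Some b) <= qstar M (rewM M) h s (Some b).
Proof.
move=> hH; rewrite /qstar /rewMb addrA subrKC lerD2l.
apply: transM_expect_le => // s'.
by apply: vstar_le_vstar => pi; exact: value_penalty_le.
Qed.

(* Deferring now and following the human afterwards does no better than
   deferring now and acting optimally in the penalized MDP afterwards. *)
Lemma vhuman_le_qstar_penalized_defer h s : (h < horizon M)%N ->
  vhuman M h s <= qstar M (rewMb M beta) h s None.
Proof.
move=> hH; rewrite vhuman_step // /qstar /rewMb subr0 lerD2l.
by apply: transM_expect_le => // s'; exact: vhuman_le_vstar_penalized.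
Qed.

End MachineMDP.

Theorem proposition1 (R : realFieldType) (S A : finType) (M : hmdp R S A)
  (beta : R) (pistar : policy M) :
  wf_hmdp M ->
  0 <= beta ->
  (* pistar is an optimal policy of the penalized MDP *)
  (forall (h : 'I_(horizon M)) (s : S),
      value M (rewMb M beta) (pol_at pistar) h s = vstar M (rewMb M beta) h s) ->
  (* chosen greedily w.r.t. Q^*_beta *)
  (forall (h : 'I_(horizon M)) (s : S) (a : option A),
      qstar M (rewMb M beta) h s a <= qstar M (rewMb M beta) h s (pistar h s)) ->
  forall (h : 'I_(horizon M)) (s : S),
    pistar h s != None ->
    beta <= qstar M (rewM M) h s (pistar h s) - vhuman M h s.
Proof.
move=> wf beta_ge0 _ greedy h s; case advice: (pistar h s) => [b|] // _.
have hH := ltn_ord h.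
rewrite lerBrDr.
apply: le_trans (qstar_penalized_advice_le wf beta_ge0 s b hH).
rewrite lerD2l -advice.
exact: le_trans (vhuman_le_qstar_penalized_defer wf beta s hH) (greedy h s None).
Qed.
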